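(* Let $\mathcal{C}$ be a $k$-linear category with exponential algebraic growth. Then there exist an object $L$ of $\mathcal{C}$ and a finite set $\Sigma$ of morphisms of $\mathcal{C}$ such that $\limsup_n\frac1n\log\dim_k W_\Sigma(n;L)>0$.
   Context: For a $k$-linear category $\mathcal{C}$, finite set $\Sigma$ of morphisms and $n\ge1$, $W_\Sigma(n)\subset\bigoplus_{K,L}\hom(K,L)$ is the $k$-span of all composable words $a_1\cdots a_l$ with $a_i\in\Sigma$, $l\le n$, and $W_\Sigma(n;L)\subset\hom(L,L)$ is the span of those such words which are endomorphisms of $L$. $\mathcal{C}$ has exponential algebraic growth if $\limsup_n\frac1n\log\dim_k W_\Sigma(n)>0$ for some finite $\Sigma$. *)

From HB Require Import structures.
From mathcomp Require Import all_boot all_order all_algebra.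
From mathcomp Require Import all_classical all_reals all_analysis.
From Stdlib Require List.
From Stdlib Require Import Rdefinitions.
From mathcomp Require Import Rstruct.

Set Implicit Arguments.
Unset Strict Implicit.
Unset Printing Implicit Defensive.
Import Order.TTheory GRing.Theory Num.Theory.
Local Open Scope ring_scope.

Record klinCat (k : fieldType) := KLinCat {
  Obj : Type;
  Hom : Obj -> Obj -> lmodType k;
  comp : forall A B C : Obj, Hom B C -> Hom A B -> Hom A C;
  idm : forall A : Obj, Hom A A;
  comp_idl : forall A B (f : Hom A B), comp (idm B) f = f;
  comp_idr : forall A B (f : Hom A B), comp f (idm A) = f;
  comp_assoc : forall A B C D (h : Hom C D) (g : Hom B C) (f : Hom A B),
      comp h (comp g f) = comp (comp h g) f;
  comp_linl : forall A B C (a : k) (g1 g2 : Hom B C) (f : Hom A B),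
      comp (a *: g1 + g2) f = a *: comp g1 f + comp g2 f;
  comp_linr : forall A B C (a : k) (g : Hom B C) (f1 f2 : Hom A B),
      comp g (a *: f1 + f2) = a *: comp g f1 + comp g f2
}.

Arguments Obj {k}.
Arguments Hom {k} C : rename.
Arguments comp {k} C {A B C0} : rename.

Definition Mor k (C : klinCat k) := {K : Obj C & {L : Obj C & Hom C K L}}.

Definition mkMor k (C : klinCat k) (K L : Obj C) (f : Hom C K L) : Mor C :=
  existT _ K (existT _ L f).

Inductive isWord k (C : klinCat k) (S : seq (Mor C))
  : nat -> forall K L : Obj C, Hom C K L -> Prop :=
| isWord1 K L (f : Hom C K L) :
    List.In (mkMor f) S -> isWord S 1 f
| isWordS l K L M (f : Hom C K L) (g : Hom C L M) :
    isWord S l f -> List.In (mkMor g) S -> isWord S l.+1 (comp C g f).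

(* Words of length 1 <= l <= n, as elements of (+)_{K,L} hom(K,L). *)
Definition Wgen k (C : klinCat k) (S : seq (Mor C)) (n : nat) : set (Mor C) :=
  fun x => exists l : nat, [/\ leq 1 l, leq l n &
      isWord S l (projT2 (projT2 x))].

Definition WgenL k (C : klinCat k) (S : seq (Mor C)) (n : nat) (L : Obj C)
  : set (Mor C) :=
  fun x => Wgen S n x /\ projT1 x = L /\ projT1 (projT2 x) = L.

(* The (K,L)-component of an element of (+)_{K,L} hom(K,L). *)
Definition comp_at k (C : klinCat k) (K L : Obj C) (x : Mor C) : Hom C K L :=
  match x with
  | existT K' (existT L' f) =>
    match pselect (K' = K) with
    | left e1 =>
      match pselect (L' = L) with
      | left e2 =>
          eq_rect L' (fun Y => Hom C K Y)
            (eq_rect K' (fun X => Hom C X L') f K e1) L e2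
      | right _ => 0
      end
    | right _ => 0
    end
  end.

(* Linear independence of a finite family x_0..x_{m-1} in
   (+)_{K,L} hom(K,L): a linear combination vanishes iff all its
   components vanish. *)
Definition lin_indep k (C : klinCat k) (m : nat) (x : 'I_m -> Mor C) : Prop :=
  forall c : 'I_m -> k,
    (forall K L : Obj C, \sum_(i < m) c i *: comp_at K L (x i) = 0) ->
    forall i, c i = 0.

Definition isDimSpan k (C : klinCat k) (P : set (Mor C)) (d : nat) : Prop :=
  (exists x : 'I_d -> Mor C, (forall i, P (x i)) /\ lin_indep x) /\
  (forall m (x : 'I_m -> Mor C), (forall i, P (x i)) -> lin_indep x -> leq m d).

(* dim_k span(P) (used only for finitely generated spans). *)
Definition dimSpan k (C : klinCat k) (P : set (Mor C)) : nat :=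
  xget 0%N [set d | isDimSpan P d].

Definition growth (d : nat -> nat) : \bar Rdefinitions.R :=
  limn_esup (fun n => (ln (d n)%:R / n%:R)%:E).

Definition exp_alg_growth k (C : klinCat k) : Prop :=
  exists S : seq (Mor C), (0 < growth (fun n => dimSpan (Wgen S n)))%E.

From Pilot Require Import Defs.
From mathcomp Require Import all_boot all_order all_algebra.
From mathcomp Require Import all_classical all_reals all_analysis.
From Stdlib Require Import Rdefinitions.
From mathcomp Require Import Rstruct.
From mathcomp Require Import lra zify.

Set Implicit Arguments.
Unset Strict Implicit.
Unset Printing Implicit Defensive.
Import Order.TTheory GRing.Theory Num.Theory.
Local Open Scope ring_scope.

(* Let S be a finite set of morphisms and let q be the number of objects met
   by S.  A word K -> L of length <= n is a walk; cutting it at its last exit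
   from K writes it as w o a o e, with e a loop at K (or the identity), a a
   letter, and w a walk that never revisits K.  Induction on the number of
   objects still allowed shows that, if every loop space W_S(n;K) has
   dimension at most D, then the words K -> L of length <= n are spanned by
   ((1+D)(1+|S|))^(q+1) vectors, hence
        dim W_S(n) <= A * max(1, D_n)^(q+1),   D_n = max_K dim W_S(n;K),
   with A independent of n.  Positive exponential growth of dim W_S(n) thus
   passes to D_n, and, the maximum being over finitely many objects, to
   dim W_S(n;L) for one object L. *)

Lemma limn_esup_inf (u : (\bar R)^nat) : limn_esup u = ereal_inf (range (esups u)).
Proof.
rewrite limn_esup_lim; apply: cvg_lim; last exact: cvg_esups_inf.
exact: ereal_hausdorff.
Qed.

Lemma growth_gt0P (d : nat -> nat) :
  (0 < growth d)%E <->
  exists2 e : R, 0 < e &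
    forall N : nat, exists2 n : nat, (N <= n)%nat & e < ln (d n)%:R / n%:R.
Proof.
rewrite /growth limn_esup_inf; split.
  set I := ereal_inf _ => I0.
  have [e e0 eI] : exists2 e : R, 0 < e & (e%:E < I)%E.
    move: I0; case: I => [r| |] //= => [|_]; last by exists 1; rewrite ?ltry.
    by rewrite lte_fin => r0; exists (r / 2); rewrite ?lte_fin; lra.
  exists e => // N.
  have : (e%:E < esups (fun n => (ln (d n)%:R / n%:R)%:E) N)%E.
    by apply: (lt_le_trans eI); apply: ereal_inf_lbound; exists N.
  by move=> /ereal_sup_gt [_ [n /= Nn <-]]; rewrite lte_fin; exists n.
move=> [e e0 He]; apply: (@lt_le_trans _ _ e%:E); first by rewrite lte_fin.
apply: le_ereal_inf_tmp => _ [N _ <-].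
have [n Nn en] := He N.
apply: (@le_trans _ _ (ln (d n)%:R / n%:R)%:E); first by rewrite lee_fin ltW.
by apply: ereal_sup_ubound; exists n.
Qed.

Lemma ln_le_poly (x A E Q : nat) :
  (0 < x)%nat -> (0 < E)%nat -> (x <= A * expn E Q)%nat ->
  ln x%:R <= ln A%:R + Q%:R * ln E%:R :> R.
Proof.
move=> x_gt0 E_gt0 xle; have : (0 < A * expn E Q)%nat by exact: leq_trans xle.
rewrite muln_gt0 => /andP[A_gt0 EQ_gt0].
apply: (@le_trans _ _ (ln (A * expn E Q)%nat%:R)).
  by rewrite ler_ln ?posrE ?ltr0n ?muln_gt0 ?A_gt0 // ler_nat.
by rewrite natrM natrX lnM ?posrE ?ltr0n ?exprn_gt0 ?ltr0n // lnXn ?ltr0n // mulr_natl.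
Qed.

(* Growth is insensitive to polynomial distortion: if d1 <= A * max(1,d2)^Q,
   then positive growth of d1 forces positive growth of d2 (with the rate
   divided by at most 2(Q+1)). *)
Lemma growth_gt0_poly_bound (d1 d2 : nat -> nat) (A Q : nat) :
  (forall n, (d1 n <= A * expn (maxn 1 (d2 n)) Q)%nat) ->
  (0 < growth d1)%E -> (0 < growth d2)%E.
Proof.
move=> bound /growth_gt0P [e e0 He]; apply/growth_gt0P.
pose a : R := ln A%:R.
have a0 : 0 <= a.
  rewrite /a; case: (posnP A) => [->|A0]; first by rewrite ln0.
  by apply: ln_ge0; rewrite ler1n.
have Q0 : 0 < Q.+1%:R :> R by rewrite ltr0n.
exists (e / (2 * Q.+1%:R)); first by rewrite divr_gt0 // mulr_gt0.
move=> N; pose N0 := Num.Def.archi_bound (2 * a / e).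
have [n Nn en] := He (maxn N N0); exists n; first exact: leq_trans (leq_maxl _ _) Nn.
have n0 : (0 < n)%nat by case: n en {Nn} => [|//]; rewrite invr0 mulr0; lra.
have nR : 0 < n%:R :> R by rewrite ltr0n.
have na : 2 * a < e * n%:R.
  have : 2 * a / e < n%:R.
    apply: (lt_le_trans (archi_boundP _)); first by rewrite divr_ge0 // ?mulr_ge0 // ltW.
    by rewrite ler_nat; exact: leq_trans (leq_maxr _ _) Nn.
  by rewrite ltr_pdivrMr // => ?; lra.
rewrite ltr_pdivlMr // in en.
set E := maxn 1 (d2 n).
have lnE0 : 0 <= ln E%:R :> R by apply: ln_ge0; rewrite ler1n leq_max.
have lnE : ln (d1 n)%:R <= a + Q%:R * ln E%:R.
  apply: ln_le_poly (bound n); last by rewrite leq_max.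
  by rewrite lt0n; apply/eqP => d0; move: en; rewrite d0 ln0 //; nra.
have : Q%:R * ln E%:R <= Q.+1%:R * ln E%:R :> R by apply: ler_wpM2r; rewrite ?ler_nat.
move=> QQ1; have lnE_big : e * n%:R < 2 * Q.+1%:R * ln E%:R by lra.
have E1 : (1 < E)%nat.
  rewrite ltnNge; apply/negP => E1.
  have : ln (E%:R : R) <= 0 by apply: ln_le0; rewrite lern1.
  by have := mulr_gt0 e0 nR; nra.
have -> : d2 n = E by apply/esym/maxn_idPr; move: E1; rewrite /E; lia.
by rewrite ltr_pdivlMr // mulrAC ltr_pdivrMr ?mulr_gt0 //; lra.
Qed.

Lemma growth_gt0_max (d1 d2 : nat -> nat) :
  (0 < growth (fun n => maxn (d1 n) (d2 n)))%E ->
  (0 < growth d1)%E \/ (0 < growth d2)%E.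
Proof.
move=> /growth_gt0P [e e0 He]; apply: contrapT => /not_orP [G1 G2].
have eventually_small (d : nat -> nat) : ~ (0 < growth d)%E ->
    exists N, forall n, (N <= n)%nat -> ~ e < ln (d n)%:R / n%:R.
  move=> Gd; apply: contrapT => /forallNP small; apply: Gd; apply/growth_gt0P.
  exists e => // N; have /existsNP [n /not_implyP [Nn en]] := small N.
  by exists n => //; apply: contrapT.
have [N1 H1] := eventually_small _ G1; have [N2 H2] := eventually_small _ G2.
have [n Nn en] := He (maxn N1 N2).
have [N1n N2n] : (N1 <= n)%nat /\ (N2 <= n)%nat by move: Nn; rewrite geq_max => /andP.
case: (leqP (d1 n) (d2 n)) => [/maxn_idPr|/ltnW/maxn_idPl] dn; rewrite dn in en.
  exact: H2 en.
exact: H1 en.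
Qed.

Lemma growth_gt0_bigmax (T : Type) (s : seq T) (d : T -> nat -> nat) :
  (0 < growth (fun n => \max_(K <- s) d K n))%E ->
  exists2 K, List.In K s & (0 < growth (d K))%E.
Proof.
elim: s => [|K s IH].
  move=> /growth_gt0P [e e0 /(_ 0%nat) [n _]].
  by rewrite big_nil ln0 // mul0r; lra.
under eq_fun do rewrite big_cons.
move=> /growth_gt0_max [GK|/IH [K' K's GK']]; first by exists K; [left|].
by exists K'; [right|].
Qed.

(* Elementary facts about the Prop-valued membership List.In, needed because
   morphisms of C form a type without decidable equality. *)
Lemma In_map (A B : Type) (f : A -> B) x s : List.In x s -> List.In (f x) (map f s).
Proof. by elim: s => //= y s IH [->|/IH]; [left|right]. Qed.

Lemma In_mem (T : eqType) (x : T) s : x \in s -> List.In x s.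
Proof. by elim: s => //= y s IH; rewrite in_cons => /orP[/eqP->|/IH]; [left|right]. Qed.

Lemma In_flatten (A B : Type) (F : A -> seq B) x y s :
  List.In x s -> List.In y (F x) -> List.In y (flatten (map F s)).
Proof.
elim: s => //= z s IH [<-|/IH H] Hy; apply/List.in_or_app; by [left|right; apply: H].
Qed.

Lemma sub_flatten (A : Type) (T : eqType) (F : A -> seq T) x s :
  List.In x s -> {subset F x <= flatten (map F s)}.
Proof.
elim: s => //= z s IH [<-|/IH H] y Hy; rewrite mem_cat ?Hy //.
by rewrite H ?orbT.
Qed.

Lemma size_flatten_map_le (A B : Type) (F : A -> seq B) s b :
  (forall x, (size (F x) <= b)%nat) -> (size (flatten (map F s)) <= size s * b)%nat.
Proof. by move=> H; elim: s => //= x s IH; rewrite size_cat mulSn leq_add. Qed.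

Lemma In_nth (T : Type) (x0 x : T) s :
  List.In x s -> exists i : 'I_(size s), nth x0 s i = x.
Proof. by elim: s => //= y s IH [->|/IH [i <-]]; [exists ord0|exists (lift ord0 i)]. Qed.

Lemma le_bigmax_In (T : Type) (F : T -> nat) x s :
  List.In x s -> (F x <= \max_(y <- s) F y)%nat.
Proof.
elim: s => //= y s IH [<-|/IH H]; rewrite big_cons; first exact: leq_maxl.
exact: leq_trans H (leq_maxr _ _).
Qed.

(* An element of
   Mor C is identified with the family of its (K,L)-components [coords x];
   [spans s w] says that the family w lies in the k-span of s, and
   [hom_spans s f] is the analogous notion inside a single space Hom K L. *)
Section Span.
Variables (k : fieldType) (C : klinCat k).
Local Notation Mor := (Mor C).
Local Notation Hom := (Defs.Hom C).
Local Notation cmp := (@Defs.comp _ C _ _ _).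

Definition coords (x : Mor) : forall K L : Obj C, Hom K L := fun K L => comp_at K L x.

Inductive spans (s : seq Mor) : (forall K L : Obj C, Hom K L) -> Prop :=
| spans_mem x w : List.In x s -> (forall K L, w K L = coords x K L) -> spans s w
| spans_zero w : (forall K L, w K L = 0) -> spans s w
| spans_comb a u v w : spans s u -> spans s v ->
    (forall K L, w K L = a *: u K L + v K L) -> spans s w.

Inductive hom_spans K L (s : seq (Hom K L)) : Hom K L -> Prop :=
| hom_spans_mem f : f \in s -> hom_spans s f
| hom_spans_zero : hom_spans s 0
| hom_spans_comb a f g : hom_spans s f -> hom_spans s g -> hom_spans s (a *: f + g).

Lemma spans_sub s t w :
  spans s w -> (forall x, List.In x s -> List.In x t) -> spans t w.
Proof.
move=> H st; elim: H => [x w0 /st|w0|a u v w0 _ Hu _ Hv]; first exact: spans_mem.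
  exact: spans_zero.
exact: spans_comb Hu Hv.
Qed.

Lemma hom_spans_sub K L (s t : seq (Hom K L)) f :
  hom_spans s f -> {subset s <= t} -> hom_spans t f.
Proof.
move=> H st; elim: H => [g /st|| a g h _ Hg _ Hh]; first exact: hom_spans_mem.
  exact: hom_spans_zero.
exact: hom_spans_comb.
Qed.

Lemma comp_at_mkMor K L (f : Hom K L) : comp_at K L (mkMor f) = f.
Proof.
rewrite /comp_at /mkMor; case: pselect => [e1|//]; case: pselect => [e2|//].
by rewrite (Prop_irrelevance e1 erefl) (Prop_irrelevance e2 erefl).
Qed.

Lemma comp_at_mkMor_comb K L K' L' (a : k) (f g : Hom K L) :
  comp_at K' L' (mkMor (a *: f + g)) =
  a *: comp_at K' L' (mkMor f) + comp_at K' L' (mkMor g).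
Proof.
rewrite /comp_at /mkMor; case: pselect => [e1|_]; last by rewrite scaler0 addr0.
case: pselect => [e2|_]; last by rewrite scaler0 addr0.
by destruct e1, e2.
Qed.

Lemma comp_at_mkMor0 K L K' L' : comp_at K' L' (mkMor (0 : Hom K L)) = 0.
Proof.
rewrite /comp_at /mkMor; case: pselect => [e1|//]; case: pselect => [e2|//].
by destruct e1, e2.
Qed.

Lemma hom_spans_spans K L (s : seq (Hom K L)) f :
  hom_spans s f -> spans (map (@mkMor _ C K L) s) (coords (mkMor f)).
Proof.
elim=> [g /In_mem /(In_map (@mkMor _ C K L))|| a g h _ Hg _ Hh].
- by move=> Hg; apply: spans_mem Hg _.
- by apply: spans_zero => K' L'; rewrite /coords comp_at_mkMor0.
- by apply: spans_comb Hg Hh _ => K' L'; rewrite /coords comp_at_mkMor_comb.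
Qed.

Lemma spans_component K L s w : spans s w -> hom_spans (map (comp_at K L) s) (w K L).
Proof.
have mem_comp_at x t : List.In x t -> comp_at K L x \in map (comp_at K L) t.
  by elim: t => //= y t IH [->|/IH H]; rewrite in_cons ?eqxx ?H ?orbT.
elim=> [x w0 Hx ->|w0 ->|a u v w0 _ Hu _ Hv ->].
- by apply: hom_spans_mem; apply: mem_comp_at.
- exact: hom_spans_zero.
- exact: hom_spans_comb.
Qed.

Lemma comp0l K L M (f : Hom K L) : cmp (0 : Hom L M) f = 0.
Proof.
have := comp_linl (-1) (0 : Hom L M) 0 f.
by rewrite scaler0 addr0 scaleN1r addNr.
Qed.

Lemma comp0r K L M (g : Hom L M) : cmp g (0 : Hom K L) = 0.
Proof.
have := comp_linr (-1) g (0 : Hom K L) 0.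
by rewrite scaler0 addr0 scaleN1r addNr.
Qed.

(* Composition is bilinear, so composites of spans are spanned by the
   composites of the spanning vectors. *)
Lemma hom_spans_compl K L M (t : seq (Hom L M)) g (f : Hom K L) :
  hom_spans t g -> hom_spans [seq cmp y f | y <- t] (cmp g f).
Proof.
elim=> [h Hh||a h1 h2 _ H1 _ H2].
- by apply: hom_spans_mem; apply: map_f.
- by rewrite comp0l; apply: hom_spans_zero.
- by rewrite comp_linl; apply: hom_spans_comb.
Qed.

Lemma hom_spans_comp K L M (t : seq (Hom L M)) (u : seq (Hom K L)) g f :
  hom_spans t g -> hom_spans u f ->
  hom_spans [seq cmp y x | y <- t, x <- u] (cmp g f).
Proof.
move=> Hg Hf; elim: Hg => [h Hh||a h1 h2 _ H1 _ H2].
- elim: Hf => [x Hx||b x1 x2 _ H1 _ H2].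
  + by apply: hom_spans_mem; apply: allpairs_f.
  + by rewrite comp0r; apply: hom_spans_zero.
  + by rewrite comp_linr; apply: hom_spans_comb.
- by rewrite comp0l; apply: hom_spans_zero.
- by rewrite comp_linl; apply: hom_spans_comb.
Qed.

Lemma spans_coef s w (x0 : Mor) : spans s w -> exists c : 'I_(size s) -> k,
  forall K L, w K L = \sum_(i < size s) c i *: comp_at K L (nth x0 s i).
Proof.
elim=> [x w0 Hx E|w0 E|a u v w0 _ [c1 H1] _ [c2 H2] E].
- have [i Hi] := In_nth x0 Hx.
  exists (fun j => (j == i)%:R) => K L; rewrite E (bigD1 i) //= eqxx scale1r Hi.
  by rewrite big1 ?addr0 // => j /negbTE ->; rewrite scale0r.
- by exists (fun _ => 0) => K L; rewrite E big1 // => j _; rewrite scale0r.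
- exists (fun j => a * c1 j + c2 j) => K L; rewrite E H1 H2 scaler_sumr -big_split.
  by apply: eq_bigr => j _; rewrite scalerDl scalerA.
Qed.

Lemma coef_spans d (x : 'I_d -> Mor) (a : 'I_d -> k) w :
  (forall K L, w K L = \sum_(j < d) a j *: comp_at K L (x j)) ->
  spans (map x (enum 'I_d)) w.
Proof.
suff sum_spans (r : seq 'I_d) : spans (map x (enum 'I_d))
    (fun K L => \sum_(j <- r) a j *: comp_at K L (x j)).
  move=> E; apply: (spans_comb (a := 1)) (sum_spans (enum 'I_d)) (spans_zero _ (fun _ _ => erefl)) _.
  by move=> K L; rewrite E big_enum /= addr0 scale1r.
elim: r => [|j r IH]; first by apply: spans_zero => K L; rewrite big_nil.
apply: (spans_comb (a := a j) (u := coords (x j)) _ IH).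
  by apply: (spans_mem (In_map _ (In_mem _))); rewrite ?mem_enum.
by move=> K L; rewrite big_cons.
Qed.

Lemma indep_le_span s m (x : 'I_m -> Mor) :
  (forall i, spans s (coords (x i))) -> lin_indep x -> (m <= size s)%nat.
Proof.
move=> Hx Hind; rewrite leqNgt; apply/negP => Hlt.
have m0 : (0 < m)%nat by move: Hlt; case: m {x Hx Hind}.
have /choice [cf Hcf] : forall i, exists c : 'I_(size s) -> k, forall K L,
    comp_at K L (x i) = \sum_(j < size s) c j *: comp_at K L (nth (x (Ordinal m0)) s j).
  by move=> i; exact: spans_coef (Hx i).
pose M : 'M[k]_(m, size s) := \matrix_(i, j) cf i j.
have [i Hi] : exists i, row i (kermx M) != 0.
  apply: contrapT => /forallNP H.
  have : kermx M != 0.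
    rewrite -mxrank_eq0 mxrank_ker; have := rank_leq_col M; lia.
  apply/negP; rewrite negbK; apply/eqP/row_matrixP => i; rewrite row0.
  by apply/eqP; apply: contrapT => Hi; apply: (H i); apply/negP.
pose u := row i (kermx M).
have uM : u *m M = 0 by rewrite /u -row_mul mulmx_ker row0.
suff /(Hind (fun j => u 0 j)) u0 : forall K L, \sum_(j < m) u 0 j *: comp_at K L (x j) = 0.
  by apply/negP: Hi; rewrite negbK; apply/eqP/rowP => j; move: (u0 j); rewrite /u !mxE.
move=> K L; under eq_bigr => j _ do rewrite (Hcf j K L) scaler_sumr.
rewrite exchange_big /=; apply: big1 => j _.
under eq_bigr => i0 _ do rewrite scalerA.
rewrite -scaler_suml; have : (u *m M) 0 j = 0 by rewrite uM mxE.
rewrite mxE => Hj; rewrite (_ : \sum_(i0 < m) u 0 i0 * cf i0 j = 0) ?scale0r //.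
by rewrite -[RHS]Hj; apply: eq_bigr => i0 _; rewrite [M _ _]mxE.
Qed.

Lemma maximal_indep_spans (P : set Mor) d (x : 'I_d -> Mor) :
  (forall i, P (x i)) -> lin_indep x ->
  (forall m (y : 'I_m -> Mor), (forall i, P (y i)) -> lin_indep y -> (m <= d)%nat) ->
  forall z, P z -> spans (map x (enum 'I_d)) (coords z).
Proof.
move=> Px Hx Hmax z Pz.
pose y : 'I_d.+1 -> Mor := fun i => if unlift ord0 i is Some j then x j else z.
have Py i : P (y i) by rewrite /y; case: unlift.
have yl j : y (lift ord0 j) = x j by rewrite /y liftK.
have y0 : y ord0 = z by rewrite /y unlift_none.
have [c Hc c0] : exists2 c : 'I_d.+1 -> k,
    (forall K L, \sum_i c i *: comp_at K L (y i) = 0) & c ord0 != 0.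
  apply: contrapT => Hno; suff /(Hmax _ _ Py) : lin_indep y by rewrite ltnn.
  move=> c Hc.
  have c0 : c ord0 = 0 by apply/eqP; apply: contrapT => /negP c0; apply: Hno; exists c.
  have Hc' K L : \sum_(j < d) c (lift ord0 j) *: comp_at K L (x j) = 0.
    have := Hc K L; rewrite big_ord_recl c0 scale0r add0r.
    by under eq_bigr => j _ do rewrite yl.
  by move=> i; case: (unliftP ord0 i) => [j ->|->] //; exact: Hx Hc' j.
apply: (coef_spans (a := fun j => - (c ord0)^-1 * c (lift ord0 j))) => K L.
have := Hc K L; rewrite big_ord_recl y0.
under eq_bigr => j _ do rewrite yl.
move/eqP; rewrite addr_eq0 => /eqP H.
have -> : coords z K L = (c ord0)^-1 *: (c ord0 *: comp_at K L z).
  by rewrite scalerA mulVf // scale1r.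
rewrite H scalerN scaler_sumr -sumrN; apply: eq_bigr => j _.
by rewrite scalerA mulNr scaleNr.
Qed.

Section FinitelySpanned.
Variables (P : set Mor) (s : seq Mor).
Hypothesis P_spanned : forall z, P z -> spans s (coords z).

Lemma dimSpanP : isDimSpan P (dimSpan P).
Proof.
pose Q m := exists x : 'I_m -> Mor, (forall i, P (x i)) /\ lin_indep x.
have Q0 : `[< Q 0%nat >].
  have x0 : 'I_0 -> Mor by case=> m; rewrite ltn0.
  by apply/asboolP; exists x0; split=> [[]|c _ []].
have Qs m : `[< Q m >] -> (m <= size s)%nat.
  move=> /asboolP [x [Px Hx]]; apply: indep_le_span Hx => i; exact: P_spanned.
have [d /asboolP [x [Px Hx]] dmax] := ex_maxnP (ex_intro _ 0%nat Q0) Qs.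
apply: (@xgetPex nat 0%nat (fun d0 => isDimSpan P d0)).
exists d; split; first by exists x.
by move=> m y Py Hy; apply: dmax; apply/asboolP; exists y.
Qed.

Lemma dimSpan_le : (dimSpan P <= size s)%nat.
Proof.
have [[x [Px Hx]] _] := dimSpanP.
by apply: (indep_le_span _ Hx) => i; apply: P_spanned.
Qed.

Lemma dimSpan_basis :
  exists2 b : seq Mor, size b = dimSpan P & forall z, P z -> spans b (coords z).
Proof.
have [[x [Px Hx]] Hmax] := dimSpanP.
exists (map x (enum 'I_(dimSpan P))); first by rewrite size_map size_enum_ord.
exact: maximal_indep_spans.
Qed.

End FinitelySpanned.

End Span.

(* Words in a finite set S of morphisms.  Only the finitely many objects
   [objects S] occurring as sources or targets of letters can carry words. *)
Section Words.
Variables (k : fieldType) (C : klinCat k) (S : seq (Mor C)).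
Local Notation Mor := (Mor C).
Local Notation Hom := (Defs.Hom C).
Local Notation cmp := (@Defs.comp _ C _ _ _).

Definition objects : seq (Obj C) :=
  flatten (map (fun x : Mor => [:: projT1 x; projT1 (projT2 x)]) S).

Lemma letter_objects K L (f : Hom K L) :
  List.In (mkMor f) S -> List.In K objects /\ List.In L objects.
Proof. by move=> H; split; apply: (In_flatten H) => /=; [left|right; left]. Qed.

Lemma isWord_objects l K L (f : Hom K L) :
  isWord S l f -> List.In K objects /\ List.In L objects.
Proof. by elim=> [? ? ? /letter_objects //|? ? ? ? ? ? _ [? _] /letter_objects []]. Qed.

Definition mor_comp (g x : Mor) : Mor :=
  mkMor (cmp (comp_at (projT1 (projT2 x)) (projT1 (projT2 g)) g) (projT2 (projT2 x))).

Fixpoint words_of_length (l : nat) : seq Mor :=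
  if l is l'.+1 then flatten (map (fun x => map (mor_comp ^~ x) S) (words_of_length l'))
  else S.

Lemma isWord_listed l K L (f : Hom K L) :
  isWord S l f -> List.In (mkMor f) (words_of_length l.-1).
Proof.
elim=> [//|l0 K0 L0 M0 f0 g0 Hw IH Hg].
have -> : l0.+1.-1 = l0.-1.+1 by case: Hw.
apply: (In_flatten IH).
have -> : mkMor (cmp g0 f0) = mor_comp (mkMor g0) (mkMor f0).
  by rewrite /mor_comp comp_at_mkMor.
exact: In_map Hg.
Qed.

Lemma Wgen_spanned n z :
  Wgen S n z -> spans (flatten (map words_of_length (iota 0 n))) (coords z).
Proof.
case: z => K [L f] [l [l1 ln Hw]] /=.
apply: (spans_mem (x := mkMor f)) => //.
apply: (In_flatten (x := l.-1)); last exact: isWord_listed.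
by apply: In_mem; rewrite mem_iota /=; lia.
Qed.

Inductive walk (P : Obj C -> Prop) : nat -> forall K L : Obj C, Hom K L -> Prop :=
| walk0 K : P K -> walk P 0 (@idm _ C K)
| walkS l K L M (f : Hom K L) (g : Hom L M) :
    walk P l f -> List.In (mkMor g) S -> P M -> walk P l.+1 (cmp g f).

Lemma walk_src P l K L (f : Hom K L) : walk P l f -> P K.
Proof. by elim. Qed.

Lemma isWord_walk l K L (f : Hom K L) : isWord S l f -> walk (fun _ => True) l f.
Proof.
elim=> [K0 L0 f0 Hf|l0 K0 L0 M0 f0 g0 _ IH Hg]; last exact: walkS.
by rewrite -(comp_idr f0); apply: walkS => //; apply: walk0.
Qed.

Lemma walk_isWord P l K L (f : Hom K L) : walk P l f ->
  forall M (g : Hom L M), List.In (mkMor g) S -> isWord S l.+1 (cmp g f).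
Proof.
elim=> [K0 _|l0 K0 L0 M0 f0 g0 _ IH Hg _] M g Hg'.
  by rewrite comp_idr; apply: isWord1.
by apply: isWordS => //; apply: IH.
Qed.

Definition short_loop n K (e : Hom K K) :=
  e = @idm _ C K \/ exists2 l, (1 <= l <= n)%nat & isWord S l e.

Lemma short_loop_mono n n' K (e : Hom K K) :
  (n <= n')%nat -> short_loop n e -> short_loop n' e.
Proof.
move=> nn [->|[l /andP[l1 ln] Hl]]; [by left|right; exists l => //].
by rewrite l1 (leq_trans ln nn).
Qed.

(* Last-exit decomposition: a walk from K either returns to K at its end
   (and is then a short loop at K), or it is f = w o a o e where e is a short
   loop at K, a is a letter leaving K, and w is a shorter walk avoiding K. *)
Lemma walk_last_exit P l K L (f : Hom K L) : walk P l f ->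
  (L = K /\ exists2 e : Hom K K, short_loop l e & f = comp_at K L (mkMor e)) \/
  (exists M (e : Hom K K) (a : Hom K M) (w : Hom M L) l',
     [/\ short_loop l e /\ List.In (mkMor a) S, M <> K,
         walk (fun y => P y /\ y <> K) l' w, (l' <= l)%nat & f = cmp w (cmp a e)]).
Proof.
elim=> [K0 PK|l0 K0 L0 M0 f0 g0 Hf IH Hg PM].
  by left; split => //; exists (@idm _ C K0); [left|rewrite comp_at_mkMor].
case: (pselect (M0 = K0)) => [EM|NM].
  subst M0; left; split => //; exists (cmp g0 f0); last by rewrite comp_at_mkMor.
  by right; exists l0.+1; [rewrite /= leqnn|exact: walk_isWord Hf _ _ Hg].
right; case: IH => [[EL [e He Hfe]]|[M [e [a [w [l' [[He Ha] HM Hw Hl' Hfe]]]]]]].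
- subst L0; rewrite comp_at_mkMor in Hfe; subst f0.
  exists M0, e, g0, (@idm _ C M0), 0%nat; split => //.
  + by split => //; exact: short_loop_mono He.
  + exact: walk0.
  + by rewrite comp_idl.
- exists M, e, a, (cmp g0 w), l'.+1; split => //.
  + by split => //; exact: short_loop_mono He.
  + exact: walkS.
  + by rewrite Hfe comp_assoc.
Qed.

End Words.

(* Forbidding an allowed element K of s strictly decreases the number of
   allowed elements of s; this is the measure of the induction below. *)
Lemma count_forbid (T : Type) (P : T -> Prop) K s : List.In K s -> P K ->
  (count (fun y => `[< P y /\ y <> K >]) s < count (fun y => `[< P y >]) s)%nat.
Proof.
elim: s => //= y s IH [<-|/IH H] PK.
  have -> : `[< P y /\ y <> y >] = false by apply/negbTE/negP => /asboolP [].
  have -> : `[< P y >] = true by apply/asboolP.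
  by rewrite add0n add1n ltnS; apply: sub_count => z /asboolP [Pz _]; apply/asboolP.
have : (`[< P y /\ y <> K >] <= `[< P y >])%nat.
  by case: asboolP => // -[Py _]; rewrite asboolT.
by have := H PK; lia.
Qed.

Section WalkBound.
Variables (k : fieldType) (C : klinCat k) (S : seq (Mor C)) (n : nat).
Variables (B : Obj C -> seq (Mor C)) (D : nat).
Hypothesis B_size : forall K, (size (B K) <= D)%nat.
Hypothesis B_spans : forall K z, WgenL S n K z -> spans (B K) (coords z).
Local Notation Mor := (Mor C).
Local Notation Hom := (Defs.Hom C).
Local Notation cmp := (@Defs.comp _ C _ _ _).

Definition loop_basis K L : seq (Hom K L) :=
  map (comp_at K L) (mkMor (@idm _ C K) :: B K).

Lemma loop_basis_size K L : (size (loop_basis K L) <= 1 + D)%nat.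
Proof. by rewrite size_map /= add1n ltnS B_size. Qed.

Lemma short_loop_spanned K l (e : Hom K K) :
  (l <= n)%nat -> short_loop S l e -> hom_spans (loop_basis K K) e.
Proof.
move=> ln [->|[l' /andP[l1 l'l] Hw]].
  by apply: hom_spans_mem; rewrite /loop_basis map_cons in_cons comp_at_mkMor eqxx.
have loopW : WgenL S n K (mkMor e) by split=> //; exists l'; split => //; exact: leq_trans ln.
have := spans_component K K (B_spans loopW); rewrite /coords comp_at_mkMor => H.
by apply: hom_spans_sub H _ => y Hy; rewrite /loop_basis map_cons in_cons Hy orbT.
Qed.

Lemma walk_span_step P K L T :
  (P K -> List.In K (objects S) -> forall M, exists s : seq (Hom M L),
     (size s <= T)%nat /\ forall l (w : Hom M L), (l <= n)%nat ->
        walk S (fun y => P y /\ y <> K) l w -> hom_spans s w) ->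
  exists s : seq (Hom K L), (size s <= (1 + D) * (1 + size S * T))%nat /\
    forall l (f : Hom K L), (l <= n)%nat -> walk S P l f -> hom_spans s f.
Proof.
move=> IH.
have loops l (f : Hom K L) : (l <= n)%nat ->
    (L = K /\ exists2 e : Hom K K, short_loop S l e & f = comp_at K L (mkMor e)) ->
    hom_spans (loop_basis K L) f.
  by move=> ln [EL [e He ->]]; subst L; rewrite comp_at_mkMor; exact: short_loop_spanned He.
case: (pselect (P K /\ List.In K (objects S))) => [[PK HK]|NPK]; last first.
  exists (loop_basis K L); split; first by apply: leq_trans (loop_basis_size K L) _; nia.
  move=> l f ln Hf; case: (walk_last_exit Hf) => [|[M [e [a [_ [_ [[_ Ha] _ _ _ _]]]]]]].
    exact: loops.
  by case: NPK; split; [exact: walk_src Hf|exact: (letter_objects Ha).1].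
pose sM M := proj1_sig (cid (IH PK HK M)).
have sMP M := proj2_sig (cid (IH PK HK M)).
pose exits (x : Mor) := [seq cmp y b | y <- [seq cmp t (comp_at K (projT1 (projT2 x)) x)
                    | t <- sM (projT1 (projT2 x))], b <- loop_basis K K].
exists (loop_basis K L ++ flatten (map exits S)); split.
  have : (size (flatten (map exits S)) <= size S * (T * (1 + D)))%nat.
    apply: size_flatten_map_le => x; rewrite size_allpairs size_map.
    exact: leq_mul (proj1 (sMP _)) (loop_basis_size K K).
  by have := loop_basis_size K L; rewrite size_cat; nia.
move=> l f ln Hf; case: (walk_last_exit Hf) => [Hloop|].
  by apply: hom_spans_sub (loops l f ln Hloop) _ => y Hy; rewrite mem_cat Hy.
move=> [M [e [a [w [l' [[He Ha] _ Hw Hl' ->]]]]]].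
rewrite comp_assoc -[a in cmp (cmp _ a) _]comp_at_mkMor.
have Hw' := (proj2 (sMP M)) l' w (leq_trans Hl' ln) Hw.
have He' := short_loop_spanned ln He.
apply: hom_spans_sub (hom_spans_comp (hom_spans_compl _ Hw') He') _ => y Hy.
by rewrite mem_cat (sub_flatten (F := exits) Ha) ?orbT.
Qed.

Definition walk_growth := ((1 + D) * (1 + size S))%nat.

Lemma walk_span m P : (count (fun y => `[< P y >]) (objects S) <= m)%nat ->
  forall K L, exists s : seq (Hom K L), (size s <= expn walk_growth m.+1)%nat /\
    forall l (f : Hom K L), (l <= n)%nat -> walk S P l f -> hom_spans s f.
Proof.
elim: m P => [|m IHm] P HP K L.
  have [|s [Hs Hsp]] := @walk_span_step P K L 1.
    by move=> PK HK; have := count_forbid HK PK; lia.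
  by exists s; split => //; apply: leq_trans Hs _; rewrite /walk_growth muln1 expn1.
have [|s [Hs Hsp]] := @walk_span_step P K L (expn walk_growth m.+1).
  by move=> PK HK M; apply: IHm; have := count_forbid HK PK; lia.
exists s; split => //; apply: leq_trans Hs _.
have : (0 < expn walk_growth m.+1)%nat by rewrite expn_gt0 /walk_growth muln_gt0.
set T := expn walk_growth m.+1 => T_gt0.
by rewrite expnS -/T /walk_growth; nia.
Qed.

Lemma dimW_walk_bound : (dimSpan (Wgen S n) <=
   size (objects S) * size (objects S) * expn walk_growth (size (objects S)).+1)%nat.
Proof.
set q := size (objects S).
have spanKL K L := @walk_span q (fun _ => True) (count_size _ _) K L.
pose sKL K L := proj1_sig (cid (spanKL K L)).
pose pairs := flatten (map (fun K => map (pair K) (objects S)) (objects S)).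
pose all_walks := flatten (map (fun p : Obj C * Obj C =>
  map (@mkMor _ C p.1 p.2) (sKL p.1 p.2)) pairs).
apply: (@leq_trans (size all_walks)).
  apply: dimSpan_le => -[K [L f] [l [l1 ln Hw]]].
  have [HK HL] := isWord_objects Hw.
  have := hom_spans_spans (proj2 (proj2_sig (cid (spanKL K L))) l f ln (isWord_walk Hw)).
  move=> /spans_sub; apply => y Hy; apply: (In_flatten (x := (K, L))) => //.
  exact: In_flatten HK (In_map (pair K) HL).
have pairs_size : (size pairs <= q * q)%nat.
  by apply: size_flatten_map_le => x; rewrite size_map.
apply: (@leq_trans (size pairs * expn walk_growth q.+1)).
  apply: size_flatten_map_le => p; rewrite size_map.
  exact: (proj1 (proj2_sig (cid (spanKL _ _)))).
exact: leq_mul.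
Qed.

End WalkBound.

Definition max_loop_dim (k : fieldType) (C : klinCat k) (S : seq (Mor C)) n : nat :=
  \max_(K <- objects S) dimSpan (WgenL S n K).

Lemma loop_dim_le_max (k : fieldType) (C : klinCat k) (S : seq (Mor C)) n K :
  (dimSpan (WgenL S n K) <= max_loop_dim S n)%nat.
Proof.
case: (pselect (List.In K (objects S))) => HK.
  exact: (le_bigmax_In (fun K => dimSpan (WgenL S n K))).
suff -> : dimSpan (WgenL S n K) = 0%nat by [].
apply/eqP; rewrite -leqn0; apply: (@dimSpan_le _ _ _ [::]).
move=> -[K' [L' f]] [[l [_ _ Hw]] [/= EK _]]; subst K'.
by case: HK; exact: (isWord_objects Hw).1.
Qed.

Lemma dimW_poly_bound (k : fieldType) (C : klinCat k) (S : seq (Mor C)) n :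
  (dimSpan (Wgen S n) <=
   size (objects S) * size (objects S) * expn (2 * (1 + size S)) (size (objects S)).+1
   * expn (maxn 1 (max_loop_dim S n)) (size (objects S)).+1)%nat.
Proof.
have basis K := dimSpan_basis (fun z (Hz : WgenL S n K z) => Wgen_spanned Hz.1).
pose B K := s2val (cid2 (basis K)).
have B_size K : (size (B K) <= max_loop_dim S n)%nat.
  by rewrite (s2valP (cid2 (basis K))) loop_dim_le_max.
apply: leq_trans (dimW_walk_bound B_size (fun K => s2valP' (cid2 (basis K)))) _.
rewrite -[X in (_ <= X)%nat]mulnA leq_mul // -expnMn leq_exp2r // mulnAC leq_mul //; lia.
Qed.

Theorem mainTheorem14 (k : fieldType) (C : klinCat k) :
  exp_alg_growth C ->
  exists (L : Obj C) (S : seq (Mor C)),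
    (0 < growth (fun n => dimSpan (WgenL S n L)))%E.
Proof.
move=> [S /(growth_gt0_poly_bound (dimW_poly_bound S)) growth_max].
have [L _ growth_L] := growth_gt0_bigmax growth_max.
by exists L, S.
Qed.
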